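(* Let $p$ be a complex polynomial of degree $m\ge1$ such that (1) $\mathbf1-p(L)$ is injective, (2) $p(L)^k\to0$ strongly as $k\to\infty$, and (3) every $z\in\mathbb C$ with $1-p(z)=0$ satisfies $|z|=1$. Let $\alpha_1,\dots,\alpha_m$ be the roots of $1-p(z)=0$ counted with multiplicity, and $X_p=\log(Y_p)-\log(Y_p^* )$ with $Y_p=\mathbf1-p(L)$. Then $\big[N,\frac imX_p\big]=-i\mathbf1$ on $\mathrm{ran}\big(\prod_{j=1}^m(\alpha_jL^*-\mathbf1)\big)\cap\mathrm D(X_pN)\cap\mathrm D(NX_p)$.
   Context: $\ell^2=\ell^2(\mathbb N)$, $\mathbb N=\{0,1,\dots\}$, basis $(\xi_n)$; $N\xi_n=n\xi_n$ (self-adjoint, maximal domain); $L$ left shift ($L\xi_n=\xi_{n-1}$, $L\xi_0=0$), $L^*$ right shift. For a linear operator $A$, $\mathrm D(\log A)=\{f\in\bigcap_{k\ge0}\mathrm D(A^k):\lim_K\sum_{k=1}^K\frac1k(\mathbf1-A)^kf\text{ exists}\}$, $\log Af=-\sum_{k\ge1}\frac1k(\mathbf1-A)^kf$; $X_p$ is defined on $\mathrm D(\log Y_p)\cap\mathrm D(\log Y_p^* )$. ''$[A,B]=C$ on $\mathcal D$'' means $\mathcal D\subset\mathrm D(AB)\cap\mathrm D(BA)$ and $(AB-BA)\varphi=C\varphi$ for $\varphi\in\mathcal D$. *)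

From Stdlib Require Import Reals ClassicalEpsilon.
From Coquelicot Require Import Coquelicot.
Open Scope R_scope.

Definition vec := nat -> C.

Definition in_l2 (f : vec) : Prop := ex_series (fun n => (Cmod (f n))^2).

Definition l2norm (f : vec) : R := sqrt (Series (fun n => (Cmod (f n))^2)).

Definition vzero : vec := fun _ => RtoC 0.
Definition vadd (f g : vec) : vec := fun n => Cplus (f n) (g n).
Definition vsub (f g : vec) : vec := fun n => Cminus (f n) (g n).
Definition vscal (a : C) (f : vec) : vec := fun n => Cmult a (f n).

Definition l2_lim (u : nat -> vec) (g : vec) : Prop :=
  in_l2 g /\ (forall K, in_l2 (u K)) /\
  is_lim_seq (fun K => l2norm (vsub (u K) g)) 0.

Definition inner_is (f g : vec) (s : C) : Prop :=
  is_series (fun n => Cmult (f n) (Cconj (g n))) s.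

Record op := Op { dom : vec -> Prop ; app : vec -> vec }.

Definition op_id : op := Op in_l2 (fun f => f).
Definition op_add (A B : op) : op :=
  Op (fun f => dom A f /\ dom B f) (fun f => vadd (app A f) (app B f)).
Definition op_sub (A B : op) : op :=
  Op (fun f => dom A f /\ dom B f) (fun f => vsub (app A f) (app B f)).
Definition op_scal (a : C) (A : op) : op := Op (dom A) (fun f => vscal a (app A f)).
Definition op_comp (A B : op) : op :=
  Op (fun f => dom B f /\ dom A (app B f)) (fun f => app A (app B f)).
Fixpoint op_pow (A : op) (k : nat) : op :=
  match k with O => op_id | S k' => op_comp A (op_pow A k') end.

Definition bnd_op (T : vec -> vec) : op := Op in_l2 T.

Definition opN : op :=
  Op (fun f => in_l2 f /\ in_l2 (fun n => Cmult (RtoC (INR n)) (f n)))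
     (fun f n => Cmult (RtoC (INR n)) (f n)).
Definition opL : op := bnd_op (fun f n => f (S n)).
Definition opLs : op := bnd_op (fun f n => match n with O => RtoC 0 | S n' => f n' end).

Definition log_partial (A : op) (f : vec) (K : nat) : vec :=
  fun n => sum_n (fun k => match k with
                          | O => RtoC 0
                          | S _ => Cmult (RtoC (/ INR k)) (app (op_pow (op_sub op_id A) k) f n)
                          end) K.

Definition log_dom (A : op) (f : vec) : Prop :=
  (forall k, dom (op_pow A k) f) /\ exists g, l2_lim (log_partial A f) g.

Definition log_val (A : op) (f : vec) : vec :=
  epsilon (inhabits vzero) (fun g => l2_lim (log_partial A f) g).

Definition op_log (A : op) : op :=
  Op (log_dom A) (fun f => vscal (RtoC (-1)) (log_val A f)).

Definition opX (Y Ys : op) : op := op_sub (op_log Y) (op_log Ys).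

Definition poly_eval (c : nat -> C) (m : nat) (z : C) : C :=
  sum_n (fun j => Cmult (c j) (pow_n z j)) m.

Definition poly_L (c : nat -> C) (m : nat) : op :=
  bnd_op (fun f n => sum_n (fun j => Cmult (c j) (app (op_pow opL j) f n)) m).

Definition is_adjoint (A B : op) : Prop :=
  forall f g, in_l2 f -> in_l2 g ->
    dom A f /\ dom B g /\ in_l2 (app A f) /\ in_l2 (app B g) /\
    exists s, inner_is (app A f) g s /\ inner_is f (app B g) s.

Fixpoint prod_op (alpha : nat -> C) (k : nat) : op :=
  match k with
  | O => op_id
  | S k' => op_comp (op_sub (op_scal (alpha k') opLs) op_id) (prod_op alpha k')
  end.

Definition ran (A : op) (g : vec) : Prop := exists f, dom A f /\ app A f = g.

Fixpoint cprod (u : nat -> C) (k : nat) : C :=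
  match k with O => RtoC 1 | S k' => Cmult (cprod u k') (u k') end.

Definition comm_on (A B Cop : op) (D : vec -> Prop) : Prop :=
  (forall f, D f -> dom (op_comp A B) f /\ dom (op_comp B A) f) /\
  (forall f, D f -> vsub (app (op_comp A B) f) (app (op_comp B A) f) = app Cop f).

(* Extending sequences on N by zero to sequences on Z turns L and L^* into the shifts S and S^-1
   and N into multiplication by the index j.  For a polynomial q one has [N, q(S)] = -(z q')(S)
   and [N, q(S^-1)] = (z q')(S^-1).  Put P = p(S), P# = conj(p)(S^-1) (which extends the adjoint of p(L)),
   R = (z p')(S) and R# = (z conj(p)')(S^-1).  Then [N, P^k] = -k R P^(k-1), so the commutator of N
   with the K-th partial sum of X_p = sum_k ((P#)^k - P^k) / k is sum_(k<K) (R# (P#)^k + R P^k).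
   Since |alpha_j| = 1, the factorisation of 1 - p gives two expressions for
   f = prod_j (alpha_j S^-1 - 1) g, namely f = kappa (1 - P#) g = mu S^-m (1 - P) g; on such f the
   sums telescope to kappa R# (g - (P#)^K g) + mu S^-m R (g - P^K g).  Strong convergence of
   p(L)^k makes P^K g and (P#)^K g vanish coordinatewise, and computing [N, prod_j (alpha_j S^-1 - 1)]
   from both factorisations shows kappa R# g + mu S^-m R g = -m f.  Hence [N, X_p] f = -m f, the
   l^2 limits defining X_p being also coordinatewise limits. *)

From Stdlib Require Import Reals ZArith Lia Lra List FunctionalExtensionality ClassicalEpsilon.
From Coquelicot Require Import Coquelicot.
Import ListNotations.
Open Scope C_scope.

(** * Two-sided sequences and polynomials in an operator *)

Notation C0 := (RtoC 0).
Notation C1 := (RtoC 1).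

Definition V := Z -> C.
Definition Vadd (x y : V) : V := fun j => x j + y j.
Definition Vscal (a : C) (x : V) : V := fun j => a * x j.
Definition V0 : V := fun _ => 0.
Definition Vsub (x y : V) : V := Vadd x (Vscal (-1) y).
Definition shl (x : V) : V := fun j => x (j + 1)%Z.
Definition shr (x : V) : V := fun j => x (j - 1)%Z.

Lemma shl_app y k : shl y k = y (k + 1)%Z. Proof. reflexivity. Qed.
Lemma shr_app y k : shr y k = y (k - 1)%Z. Proof. reflexivity. Qed.

Definition linear_map (T : V -> V) : Prop :=
  (forall x y, T (Vadd x y) = Vadd (T x) (T y)) /\
  (forall a x, T (Vscal a x) = Vscal a (T x)).

Lemma linear_vsub (T : V -> V) x y : linear_map T -> T (Vsub x y) = Vsub (T x) (T y).
Proof. intros [HA HS]. unfold Vsub. rewrite HA, HS. reflexivity. Qed.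

Lemma linear_shl : linear_map shl. Proof. split; reflexivity. Qed.
Lemma linear_shr : linear_map shr. Proof. split; reflexivity. Qed.

Lemma linear_map_zero T : linear_map T -> T V0 = V0.
Proof.
  intros [_ HS].
  replace V0 with (Vscal 0 V0) by (apply functional_extensionality; intro; unfold Vscal, V0; ring).
  rewrite HS. apply functional_extensionality; intro; unfold Vscal, V0; ring.
Qed.

(* poly_op T a = a(T) for a polynomial a given by its coefficient list, constant term first. *)
Fixpoint poly_op (T : V -> V) (a : list C) (x : V) : V :=
  match a with
  | nil => V0
  | c0 :: a' => fun j => c0 * x j + T (poly_op T a' x) j
  end.

Lemma poly_op_add T a x y : linear_map T -> poly_op T a (Vadd x y) = Vadd (poly_op T a x) (poly_op T a y).
Proof.
  intros HT. induction a as [|c0 a IH]; simpl.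
  - apply functional_extensionality; intro; unfold V0, Vadd; ring.
  - rewrite IH. destruct HT as [HA _]. rewrite HA.
    apply functional_extensionality; intro; unfold Vadd; ring.
Qed.

Lemma poly_op_scal T a k x : linear_map T -> poly_op T a (Vscal k x) = Vscal k (poly_op T a x).
Proof.
  intros HT. induction a as [|c0 a IH]; simpl.
  - apply functional_extensionality; intro; unfold V0, Vscal; ring.
  - rewrite IH. destruct HT as [_ HS]. rewrite HS.
    apply functional_extensionality; intro; unfold Vscal; ring.
Qed.

Lemma poly_op_commute T U a x : linear_map U -> (forall y, U (T y) = T (U y)) ->
  U (poly_op T a x) = poly_op T a (U x).
Proof.
  intros HU HUT. induction a as [|c0 a IH]; simpl.
  - apply linear_map_zero; auto.
  - destruct HU as [HA HS].
    change (fun j => c0 * x j + T (poly_op T a x) j) with (Vadd (Vscal c0 x) (T (poly_op T a x))).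
    rewrite HA, HS, HUT, IH. reflexivity.
Qed.

Lemma poly_op_commute_base T a x : linear_map T -> T (poly_op T a x) = poly_op T a (T x).
Proof. intros HT. apply poly_op_commute; auto. Qed.

Lemma linear_poly_op T a : linear_map T -> linear_map (poly_op T a).
Proof. intros HT; split; intros; [apply poly_op_add|apply poly_op_scal]; auto. Qed.

Lemma poly_op_comm T a b x : linear_map T -> poly_op T a (poly_op T b x) = poly_op T b (poly_op T a x).
Proof.
  intros HT. apply poly_op_commute. apply linear_poly_op; auto.
  intros y. symmetry. apply poly_op_commute_base; auto.
Qed.

Fixpoint padd (a b : list C) : list C :=
  match a, b with
  | nil, _ => b
  | _, nil => a
  | x :: a', y :: b' => (x + y) :: padd a' b'
  end.
Definition pscale (k : C) (a : list C) : list C := map (Cmult k) a.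
Fixpoint pmul (a b : list C) : list C :=
  match a with
  | nil => nil
  | x :: a' => padd (pscale x b) (C0 :: pmul a' b)
  end.
Fixpoint ppow (a : list C) (n : nat) : list C :=
  match n with O => [C1] | S n' => pmul a (ppow a n') end.
Fixpoint peval (a : list C) (z : C) : C :=
  match a with nil => 0 | x :: a' => x + z * peval a' z end.

Lemma poly_op_padd T a b x : linear_map T -> poly_op T (padd a b) x = Vadd (poly_op T a x) (poly_op T b x).
Proof.
  intros HT. revert b; induction a as [|c0 a IH]; intros b; simpl.
  - apply functional_extensionality; intro; unfold V0, Vadd; ring.
  - destruct b as [|d0 b]; simpl.
    + apply functional_extensionality; intro; unfold V0, Vadd; ring.
    + rewrite IH. destruct HT as [HA _]. rewrite HA.
      apply functional_extensionality; intro; unfold Vadd; ring.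
Qed.

Lemma poly_op_pscale T k a x : linear_map T -> poly_op T (pscale k a) x = Vscal k (poly_op T a x).
Proof.
  intros HT. induction a as [|c0 a IH]; simpl.
  - apply functional_extensionality; intro; unfold V0, Vscal; ring.
  - fold (pscale k a). rewrite IH. destruct HT as [_ HS]. rewrite HS.
    apply functional_extensionality; intro; unfold Vscal; ring.
Qed.

Lemma poly_op_pmul T a b x : linear_map T -> poly_op T (pmul a b) x = poly_op T a (poly_op T b x).
Proof.
  intros HT. induction a as [|c0 a IH]; simpl. reflexivity.
  rewrite poly_op_padd, poly_op_pscale by auto. simpl. rewrite IH.
  apply functional_extensionality; intro; unfold Vadd, Vscal, V0; ring.
Qed.

Lemma poly_op_ppow T a n x : linear_map T -> poly_op T (ppow a n) x = Nat.iter n (poly_op T a) x.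
Proof.
  intros HT. induction n as [|n IH]; simpl.
  - rewrite linear_map_zero by auto. apply functional_extensionality; intro; unfold V0; ring.
  - rewrite poly_op_pmul, IH by auto. reflexivity.
Qed.

Lemma poly_op_zero_coefs T b x : linear_map T -> (forall i, nth i b C0 = 0) -> poly_op T b x = V0.
Proof.
  intros HT. induction b as [|d b IH]; intros Hb; simpl. reflexivity.
  rewrite IH. rewrite linear_map_zero by auto. specialize (Hb O). simpl in Hb. subst.
  apply functional_extensionality; intro; unfold V0; ring.
  intros i; apply (Hb (S i)).
Qed.

Lemma poly_op_coefs_eq T a b x : linear_map T -> (forall i, nth i a C0 = nth i b C0) -> poly_op T a x = poly_op T b x.
Proof.
  intros HT. revert b; induction a as [|c0 a IH]; intros b' Hab.
  - symmetry; apply poly_op_zero_coefs; auto. intros i; rewrite <- Hab; destruct i; reflexivity.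
  - destruct b' as [|d b].
    + apply poly_op_zero_coefs; auto. intros i; rewrite Hab; destruct i; reflexivity.
    + simpl. rewrite (IH b). pose proof (Hab O) as H0. simpl in H0. subst. reflexivity.
      intros i; apply (Hab (S i)).
Qed.

Lemma nth_padd a b i : nth i (padd a b) C0 = nth i a C0 + nth i b C0.
Proof.
  revert b i; induction a as [|x a IH]; intros b i; simpl.
  - destruct i; ring.
  - destruct b as [|y b]; destruct i; simpl; try ring; auto.
Qed.

Lemma nth_pscale k a i : nth i (pscale k a) C0 = k * nth i a C0.
Proof.
  revert i; induction a as [|x a IH]; intros i; simpl; destruct i; simpl; try ring; auto.
Qed.

Lemma peval_padd a b z : peval (padd a b) z = peval a z + peval b z.
Proof.
  revert b; induction a as [|x a IH]; intros b; simpl. ring.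
  destruct b as [|y b]; simpl. ring. rewrite IH; ring.
Qed.

Lemma peval_pscale k a z : peval (pscale k a) z = k * peval a z.
Proof. induction a as [|x a IH]; simpl. ring. fold (pscale k a). rewrite IH; ring. Qed.

Lemma peval_pmul a b z : peval (pmul a b) z = peval a z * peval b z.
Proof.
  induction a as [|x a IH]; simpl. ring.
  rewrite peval_padd, peval_pscale. simpl. rewrite IH. ring.
Qed.

(** * A polynomial is determined by its values *)

Fixpoint sumabs (a : list C) : R :=
  match a with nil => 0%R | x :: a' => (Cmod x + sumabs a')%R end.

Lemma sumabs_ge0 a : (0 <= sumabs a)%R.
Proof. induction a; simpl. lra. pose proof (Cmod_ge_0 a). lra. Qed.

Lemma peval_bound a z : (Cmod z <= 1)%R -> (Cmod (peval a z) <= sumabs a)%R.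
Proof.
  intros Hz. induction a as [|x a IH]; simpl.
  - rewrite Cmod_0. lra.
  - eapply Rle_trans. apply Cmod_triangle. rewrite Cmod_mult.
    pose proof (Cmod_ge_0 z). pose proof (Cmod_ge_0 (peval a z)).
    assert (Cmod z * Cmod (peval a z) <= 1 * Cmod (peval a z))%R by (apply Rmult_le_compat_r; lra).
    lra.
Qed.

(* Evaluate at a small positive real t: then |x| = t |a(t)| <= t * sumabs a < |x|. *)
Lemma peval_vanishing_head x a : (forall z : C, z <> C0 -> peval (x :: a) z = 0) -> x = 0.
Proof.
  intros H. destruct (Req_dec (Cmod x) 0) as [E|E]; [apply Cmod_eq_0; auto|exfalso].
  pose proof (Cmod_ge_0 x) as Hx0. pose proof (sumabs_ge0 a). set (B := sumabs a) in *.
  assert (Hxp : (0 < Cmod x)%R) by lra.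
  set (t := Rmin 1 (Cmod x / (2 * (B + 1)))).
  assert (Ht0 : (0 < t)%R) by (apply Rmin_pos; [lra|apply Rdiv_lt_0_compat; lra]).
  assert (Ht1 : (t <= 1)%R) by apply Rmin_l.
  assert (Ht2 : (t <= Cmod x / (2 * (B + 1)))%R) by apply Rmin_r.
  assert (Hz : RtoC t <> 0) by (intro E'; apply RtoC_inj in E'; lra).
  specialize (H _ Hz). simpl in H.
  assert (Hxe : x = - (RtoC t * peval a t)) by (rewrite <- (Cplus_0_r (- _)), <- H; ring).
  assert (Cmod x <= t * B)%R.
  { rewrite Hxe, Cmod_opp, Cmod_mult, Cmod_R, Rabs_pos_eq by lra.
    apply Rmult_le_compat_l; [lra|]. apply peval_bound. rewrite Cmod_R, Rabs_pos_eq; lra. }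
  assert (t * B <= Cmod x / (2 * (B + 1)) * B)%R by (apply Rmult_le_compat_r; lra).
  assert (Cmod x / (2 * (B + 1)) * B < Cmod x)%R.
  { unfold Rdiv. rewrite Rmult_assoc. rewrite <- (Rmult_1_r (Cmod x)) at 2.
    apply Rmult_lt_compat_l; [lra|]. apply (Rmult_lt_reg_l (2 * (B + 1))); [lra|].
    field_simplify; lra. }
  lra.
Qed.

Lemma peval_zero_coefs a : (forall z : C, z <> C0 -> peval a z = 0) -> forall i, nth i a C0 = 0.
Proof.
  induction a as [|x a IH]; intros H i; [destruct i; reflexivity|].
  assert (Hx := peval_vanishing_head x a H).
  destruct i as [|i]; simpl; auto.
  apply IH. intros z Hz. specialize (H z Hz). simpl in H. rewrite Hx in H.
  assert (Hza : z * peval a z = 0) by (rewrite <- H; ring).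
  replace (peval a z) with (/ z * (z * peval a z)) by (field; auto). rewrite Hza; ring.
Qed.

Lemma peval_coefs_eq a b : (forall z : C, peval a z = peval b z) -> forall i, nth i a C0 = nth i b C0.
Proof.
  intros H i.
  assert (E := peval_zero_coefs (padd a (pscale (-1) b))).
  assert (forall z : C, z <> C0 -> peval (padd a (pscale (-1) b)) z = 0).
  { intros z _. rewrite peval_padd, peval_pscale, H. ring. }
  specialize (E H0 i). rewrite nth_padd, nth_pscale in E.
  replace (nth i a C0) with ((nth i a C0 + -1 * nth i b C0) + nth i b C0) by ring.
  rewrite E; ring.
Qed.

(** * Commutators with the position operator *)

Definition posZ (x : V) : V := fun j => RtoC (IZR j) * x j.
Definition commN (T : V -> V) (x : V) : V := Vsub (posZ (T x)) (T (posZ x)).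

(* Coefficients of z a'(z). *)
Fixpoint pXderiv (a : list C) : list C :=
  match a with nil => nil | x :: a' => C0 :: padd a' (pXderiv a') end.

Lemma commN_comp T U x : linear_map T -> commN (fun y => T (U y)) x = Vadd (commN T (U x)) (T (commN U x)).
Proof.
  intros [HA HS]. unfold commN, Vsub. rewrite HA, HS.
  apply functional_extensionality; intro j; unfold Vadd, Vscal; ring.
Qed.

Lemma commN_poly T s a x : linear_map T -> (forall y, commN T y = Vscal s (T y)) ->
  commN (poly_op T a) x = Vscal s (poly_op T (pXderiv a) x).
Proof.
  intros HT HC. revert x. induction a as [|c0 a IH]; intros x; apply functional_extensionality; intro j.
  - cbn. unfold commN, Vsub, Vadd, Vscal, posZ, V0. ring.
  - assert (E := equal_f (commN_comp T (poly_op T a) x HT) j).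
    rewrite HC, IH in E. destruct HT as [HA HS]. rewrite HS in E.
    cbn [pXderiv poly_op]. rewrite poly_op_padd by (split; auto). rewrite HA.
    unfold commN, Vsub, Vadd, Vscal, posZ in *. cbn [poly_op] in *.
    transitivity (s * T (poly_op T a x) j + s * T (poly_op T (pXderiv a) x) j); [rewrite <- E|]; ring.
Qed.

Lemma commN_shl y : commN shl y = Vscal (-1) (shl y).
Proof.
  apply functional_extensionality; intro j. unfold commN, Vsub, Vadd, Vscal, posZ, shl.
  rewrite plus_IZR, RtoC_plus. ring.
Qed.

Lemma commN_shr y : commN shr y = Vscal 1 (shr y).
Proof.
  apply functional_extensionality; intro j. unfold commN, Vsub, Vadd, Vscal, posZ, shr.
  rewrite minus_IZR. unfold Rminus. rewrite RtoC_plus, RtoC_opp. ring.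
Qed.

Lemma commN_poly_shl a x : commN (poly_op shl a) x = Vscal (-1) (poly_op shl (pXderiv a) x).
Proof. exact (commN_poly shl (-1) a x linear_shl commN_shl). Qed.

Lemma commN_poly_shr a x : commN (poly_op shr a) x = Vscal 1 (poly_op shr (pXderiv a) x).
Proof. exact (commN_poly shr 1 a x linear_shr commN_shr). Qed.

Lemma linear_iter (P : V -> V) k : linear_map P -> linear_map (Nat.iter k P).
Proof.
  intros [HA HS]. induction k as [|k [IA IS]]; split; intros.
  - reflexivity.
  - reflexivity.
  - change (P (Nat.iter k P (Vadd x y)) = Vadd (P (Nat.iter k P x)) (P (Nat.iter k P y))).
    rewrite IA, HA; auto.
  - change (P (Nat.iter k P (Vscal a x)) = Vscal a (P (Nat.iter k P x))).
    rewrite IS, HS; auto.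
Qed.

Lemma iter_comm (P R : V -> V) k x : (forall y, R (P y) = P (R y)) -> R (Nat.iter k P x) = Nat.iter k P (R x).
Proof. intros H. induction k; simpl; auto. rewrite H, IHk; auto. Qed.

Lemma commN_iter (P R : V -> V) (s : C) k x : linear_map P -> linear_map R -> (forall y, R (P y) = P (R y)) ->
  (forall y, commN P y = Vscal s (R y)) ->
  commN (Nat.iter (S k) P) x = Vscal (s * RtoC (INR (S k))) (R (Nat.iter k P x)).
Proof.
  intros HP HR HRP HC. induction k as [|k IH].
  - simpl. change (Nat.iter 0 P x) with x. rewrite HC.
    apply functional_extensionality; intro j; unfold Vscal; simpl. ring.
  - change (commN (fun y => P (Nat.iter (S k) P y)) x = Vscal (s * RtoC (INR (S (S k)))) (R (Nat.iter (S k) P x))).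
    rewrite commN_comp by auto. rewrite IH, HC.
    destruct HP as [_ HS]. rewrite HS. rewrite <- HRP.
    change (P (Nat.iter k P x)) with (Nat.iter (S k) P x).
    apply functional_extensionality; intro j; unfold Vadd, Vscal.
    rewrite (S_INR (S k)). rewrite RtoC_plus. ring.
Qed.

Definition shrn (d : nat) (x : V) : V := fun j => x (j - Z.of_nat d)%Z.
Lemma linear_shrn d : linear_map (shrn d). Proof. split; reflexivity. Qed.
Lemma shrn_shl d y : shrn d (shl y) = shl (shrn d y).
Proof. apply functional_extensionality; intro j; unfold shrn, shl. f_equal; lia. Qed.

Lemma shr_shrn d y : shr (shrn d y) = shrn (S d) y.
Proof. apply functional_extensionality; intro j; unfold shrn, shr. f_equal; lia. Qed.
Lemma shrn_0 y : shrn 0 y = y.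
Proof. apply functional_extensionality; intro j; unfold shrn. f_equal; lia. Qed.

Fixpoint fsum (f : nat -> C) (n : nat) : C :=
  match n with O => 0 | S n' => fsum f n' + f n' end.

Lemma fsum_front (f : nat -> C) n : fsum f (S n) = f O + fsum (fun i => f (S i)) n.
Proof. induction n; simpl in *. ring. rewrite IHn. ring. Qed.

Lemma fsum_ext (f g : nat -> C) n : (forall i, (i < n)%nat -> f i = g i) -> fsum f n = fsum g n.
Proof. induction n; intros H; simpl; auto. rewrite IHn, H; auto. Qed.

Lemma fsum_add (f g : nat -> C) n : fsum (fun i => f i + g i) n = fsum f n + fsum g n.
Proof. induction n; simpl. ring. rewrite IHn; ring. Qed.

Lemma fsum_scal (k : C) (f : nat -> C) n : fsum (fun i => k * f i) n = k * fsum f n.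
Proof. induction n; simpl. ring. rewrite IHn; ring. Qed.

Lemma fsum_sub (f g : nat -> C) n : fsum (fun i => f i - g i) n = fsum f n - fsum g n.
Proof. induction n; simpl. ring. rewrite IHn; ring. Qed.

Lemma fsum_tele (y : nat -> C) K : fsum (fun k => y k - y (S k)) K = y O - y K.
Proof. induction K; simpl. ring. rewrite IHK. ring. Qed.

Lemma fsum_zero (f : nat -> C) n : (forall i, f i = 0) -> fsum f n = 0.
Proof. intros H; induction n; simpl; auto. rewrite IHn, H; ring. Qed.

Lemma sum_n_fsum (f : nat -> C) n : sum_n f n = fsum f (S n).
Proof.
  induction n. rewrite sum_O. simpl. ring.
  rewrite sum_Sn, IHn. reflexivity.
Qed.

Definition zdelta (n : Z) : V := fun j => if Z.eq_dec j n then C1 else C0.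

Lemma shl_zdelta n : shl (zdelta n) = zdelta (n - 1).
Proof.
  apply functional_extensionality; intro j; unfold shl, zdelta.
  destruct (Z.eq_dec (j+1) n), (Z.eq_dec j (n-1)); auto; lia.
Qed.

Lemma fsum_delta (G : V) n N : (n <= Z.of_nat N)%Z -> ((n < 0)%Z -> G n = C0) ->
  fsum (fun j => zdelta n (Z.of_nat j) * G (Z.of_nat j)) (S N) = G n.
Proof.
  intros HnN Hneg. induction N as [|N IH].
  - simpl. unfold zdelta. destruct (Z.eq_dec 0 n).
    + subst. simpl. ring.
    + rewrite Hneg by lia. ring.
  - change (fsum (fun j => zdelta n (Z.of_nat j) * G (Z.of_nat j)) (S N) + zdelta n (Z.of_nat (S N)) * G (Z.of_nat (S N)) = G n).
    destruct (Z.eq_dec n (Z.of_nat (S N))) as [E|E].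
    + rewrite (fsum_ext _ (fun _ => C0)).
      rewrite fsum_zero by auto. unfold zdelta. rewrite E. destruct (Z.eq_dec _ _); [|lia]. ring.
      intros i Hi. unfold zdelta. destruct (Z.eq_dec (Z.of_nat i) n); [lia|]. ring.
    + rewrite IH by lia. unfold zdelta. destruct (Z.eq_dec (Z.of_nat (S N)) n); [lia|]. ring.
Qed.

Definition supp_nonneg (G : V) := forall j, (j < 0)%Z -> G j = C0.

Lemma poly_shr_supp a G : supp_nonneg G -> supp_nonneg (poly_op shr a G).
Proof.
  intros HG. induction a as [|c0 a IH]; intros j Hj; simpl. reflexivity.
  rewrite shr_app, HG, IH by lia. ring.
Qed.

(* q(S^-1) is the transpose of q(S). *)
Lemma poly_shr_dual a G n N : supp_nonneg G -> (n <= Z.of_nat N)%Z ->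
  poly_op shr a G n = fsum (fun j => poly_op shl a (zdelta n) (Z.of_nat j) * G (Z.of_nat j)) (S N).
Proof.
  intros HG. revert n; induction a as [|c0 a IH]; intros n Hn.
  - cbn [poly_op]. unfold V0 at 1. symmetry. apply fsum_zero. intros i. unfold V0. ring.
  - cbn [poly_op]. rewrite shr_app.
    rewrite (fsum_ext _ (fun j => c0 * (zdelta n (Z.of_nat j) * G (Z.of_nat j)) + poly_op shl a (zdelta (n-1)) (Z.of_nat j) * G (Z.of_nat j))).
    2:{ intros i Hi. rewrite <- shl_zdelta. rewrite <- (poly_op_commute_base shl) by apply linear_shl. rewrite shl_app. ring. }
    rewrite fsum_add, fsum_scal. rewrite fsum_delta by (auto; lia).
    rewrite <- IH by lia. reflexivity.
Qed.

Lemma poly_shl_seq (c : nat -> C) k l F j :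
  poly_op shl (map c (seq k l)) F j = fsum (fun i => c (k + i)%nat * F (j + Z.of_nat i)%Z) l.
Proof.
  revert k j; induction l as [|l IH]; intros k j. reflexivity.
  cbn [map seq poly_op]. rewrite shl_app, IH. rewrite fsum_front.
  rewrite Nat.add_0_r. replace (j + Z.of_nat 0)%Z with j by lia. f_equal.
  apply fsum_ext. intros i _. f_equal. f_equal. lia. f_equal. lia.
Qed.

Lemma Cconj_0 : Cconj C0 = C0.
Proof. unfold Cconj; simpl. apply injective_projections; simpl; lra. Qed.
Lemma Cconj_1 : Cconj C1 = C1.
Proof. unfold Cconj; simpl. apply injective_projections; simpl; lra. Qed.

Lemma map_conj_padd a b : map Cconj (padd a b) = padd (map Cconj a) (map Cconj b).
Proof.
  revert b; induction a as [|x a IH]; intros b; simpl. reflexivity.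
  destruct b as [|y b]; simpl. reflexivity. rewrite IH, Cplus_conj. reflexivity.
Qed.
Lemma map_conj_pscale k a : map Cconj (pscale k a) = pscale (Cconj k) (map Cconj a).
Proof. induction a as [|x a IH]; simpl. reflexivity. fold (pscale k a). rewrite IH, Cmult_conj. reflexivity. Qed.
Lemma map_conj_pmul a b : map Cconj (pmul a b) = pmul (map Cconj a) (map Cconj b).
Proof.
  induction a as [|x a IH]; simpl. reflexivity.
  rewrite map_conj_padd, map_conj_pscale. simpl. rewrite IH, Cconj_0. reflexivity.
Qed.
Lemma map_conj_ppow a n : map Cconj (ppow a n) = ppow (map Cconj a) n.
Proof. induction n; simpl. rewrite Cconj_1. reflexivity. rewrite map_conj_pmul, IHn. reflexivity. Qed.

Lemma Cconj_fsum (f : nat -> C) n : Cconj (fsum f n) = fsum (fun k => Cconj (f k)) n.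
Proof. induction n; simpl. apply Cconj_0. rewrite Cplus_conj, IHn. reflexivity. Qed.

Lemma poly_shl_conj a F j : (forall k, Cconj (F k) = F k) ->
  Cconj (poly_op shl a F j) = poly_op shl (map Cconj a) F j.
Proof.
  intros HF. revert j; induction a as [|x a IH]; intros j; simpl.
  - unfold V0. apply Cconj_0.
  - rewrite shl_app, Cplus_conj, Cmult_conj, HF, IH. reflexivity.
Qed.

Lemma zdelta_real n k : Cconj (zdelta n k) = zdelta n k.
Proof. unfold zdelta; destruct (Z.eq_dec k n). apply Cconj_1. apply Cconj_0. Qed.

Lemma norm_Rabs (x : R) : @norm R_AbsRing R_NormedModule x = Rabs x.
Proof. reflexivity. Qed.

Definition Cconv (u : nat -> C) (l : C) : Prop := is_lim_seq (fun K => Cmod (u K - l)) 0%R.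

Lemma Cconv_eq u l l' : Cconv u l -> l = l' -> Cconv u l'.
Proof. intros H E; subst; auto. Qed.

Lemma Cconv_unique u l1 l2 : Cconv u l1 -> Cconv u l2 -> l1 = l2.
Proof.
  intros H1 H2.
  assert (Hle : Rbar_le (Cmod (l1 - l2)) (0 + 0)%R).
  { apply (is_lim_seq_le (fun _ => Cmod (l1 - l2)) (fun K => Cmod (u K - l1) + Cmod (u K - l2))%R).
    - intros K. replace (l1 - l2) with (- (u K - l1) + (u K - l2)) by ring.
      eapply Rle_trans. apply Cmod_triangle. rewrite Cmod_opp. lra.
    - apply is_lim_seq_const.
    - apply is_lim_seq_plus'; auto. }
  simpl in Hle. pose proof (Cmod_ge_0 (l1 - l2)).
  assert (Cmod (l1 - l2) = 0%R) by lra. apply Cmod_eq_0 in H0.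
  replace l1 with ((l1 - l2) + l2) by ring. rewrite H0. ring.
Qed.

Lemma Cconv_squeeze u l (r : nat -> R) : (forall K, Cmod (u K - l) <= r K)%R -> is_lim_seq r 0%R -> Cconv u l.
Proof.
  intros Hb Hr. apply (is_lim_seq_le_le (fun _ => 0%R) _ r). intros K; split. apply Cmod_ge_0. auto.
  apply is_lim_seq_const. auto.
Qed.

Lemma Cconv_plus u v l1 l2 : Cconv u l1 -> Cconv v l2 -> Cconv (fun K => u K + v K) (l1 + l2).
Proof.
  intros H1 H2. apply (Cconv_squeeze _ _ (fun K => Cmod (u K - l1) + Cmod (v K - l2))%R).
  - intros K. replace (u K + v K - (l1 + l2)) with ((u K - l1) + (v K - l2)) by ring. apply Cmod_triangle.
  - replace 0%R with (0 + 0)%R by ring. apply is_lim_seq_plus'; auto.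
Qed.

Lemma Cconv_scal k u l : Cconv u l -> Cconv (fun K => k * u K) (k * l).
Proof.
  intros H. apply (Cconv_squeeze _ _ (fun K => Cmod k * Cmod (u K - l))%R).
  - intros K. replace (k * u K - k * l) with (k * (u K - l)) by ring. rewrite Cmod_mult. lra.
  - replace 0%R with (Cmod k * 0)%R by ring. apply (is_lim_seq_scal_l _ (Cmod k) 0%R); auto.
Qed.

Lemma Cconv_const l : Cconv (fun _ => l) l.
Proof.
  apply (Cconv_squeeze _ _ (fun _ => 0%R)). intros K. replace (l - l) with C0 by ring. rewrite Cmod_0; lra.
  apply is_lim_seq_const.
Qed.

Lemma Cconv_ext u v l : (forall K, u K = v K) -> Cconv u l -> Cconv v l.
Proof. intros H Hu. unfold Cconv. eapply is_lim_seq_ext; [|apply Hu]. intros K; simpl; rewrite H; auto. Qed.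

Lemma Cconv_fsum (u : nat -> nat -> C) (l : nat -> C) n :
  (forall i, (i < n)%nat -> Cconv (fun K => u K i) (l i)) -> Cconv (fun K => fsum (u K) n) (fsum l n).
Proof.
  induction n; intros H; simpl.
  - apply Cconv_const.
  - apply Cconv_plus. apply IHn; auto. apply H; lia.
Qed.

Lemma Cconv_conj u l : Cconv u l -> Cconv (fun K => Cconj (u K)) (Cconj l).
Proof.
  intros H. eapply Cconv_squeeze; [|apply H]. intros K. simpl.
  assert (E : Cconj (u K) - Cconj l = Cconj (u K - l)).
  { unfold Cconj, Cminus, Cplus, Copp; simpl. apply injective_projections; simpl; lra. }
  rewrite E, Cmod_conj; lra.
Qed.

Lemma sum_n_stable {G : AbelianMonoid} (a : nat -> G) N n :
  (forall k, (N < k)%nat -> a k = zero) -> (N <= n)%nat -> sum_n a n = sum_n a N.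
Proof.
  intros Ha Hn. induction Hn. reflexivity.
  rewrite sum_Sn, IHHn, Ha by lia. apply plus_zero_r.
Qed.

Lemma is_series_fin {K : AbsRing} {Vm : NormedModule K} (a : nat -> Vm) N :
  (forall k, (N < k)%nat -> a k = zero) -> is_series a (sum_n a N).
Proof.
  intros Ha. unfold is_series.
  apply (filterlim_ext_loc (fun _ => sum_n a N)).
  exists N. intros n Hn. symmetry. apply sum_n_stable; auto.
  apply filterlim_const.
Qed.

Lemma is_series_fin_unique (a : nat -> C) N l :
  (forall k, (N < k)%nat -> a k = zero) -> is_series a l -> l = sum_n a N.
Proof.
  intros Ha Hs.
  assert (H : filterlim (fun _ : nat => sum_n a N) eventually (locally l)).
  { apply (filterlim_ext_loc (sum_n a)). exists N. intros n Hn. apply sum_n_stable; auto. auto. }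
  symmetry. apply is_filter_lim_locally_unique.
  intros P HP. apply locally_locally in HP. specialize (H _ HP). destruct H as [M HM]. apply (HM M). lia.
Qed.

Lemma in_l2_add (f g : vec) : in_l2 f -> in_l2 g -> in_l2 (fun n => f n + g n).
Proof.
  intros Hf Hg. unfold in_l2 in *.
  apply (@ex_series_le R_AbsRing R_CompleteNormedModule _ (fun n => 2 * (Cmod (f n))^2 + 2 * (Cmod (g n))^2)%R).
  - intros n. rewrite norm_Rabs. rewrite Rabs_pos_eq by apply pow2_ge_0.
    pose proof (Cmod_triangle (f n) (g n)). pose proof (Cmod_ge_0 (f n + g n)).
    pose proof (Cmod_ge_0 (f n)). pose proof (Cmod_ge_0 (g n)).
    assert (Cmod (f n + g n) ^ 2 <= (Cmod (f n) + Cmod (g n)) ^ 2)%R by (apply pow_incr; lra).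
    pose proof (pow2_ge_0 (Cmod (f n) - Cmod (g n))). simpl in *. nra.
  - apply (@ex_series_ext R_AbsRing R_NormedModule (fun n => plus (scal (2:R) (Cmod (f n)^2)%R) (scal (2:R) (Cmod (g n)^2)%R))).
    intros; reflexivity.
    apply (@ex_series_plus R_AbsRing R_NormedModule); apply (@ex_series_scal_l R_AbsRing R_NormedModule); auto.
Qed.

Lemma in_l2_scal (k : C) (f : vec) : in_l2 f -> in_l2 (fun n => k * f n).
Proof.
  intros Hf. unfold in_l2 in *.
  apply (@ex_series_le R_AbsRing R_CompleteNormedModule _ (fun n => (Cmod k)^2 * (Cmod (f n))^2)%R).
  - intros n. rewrite norm_Rabs. rewrite Rabs_pos_eq by apply pow2_ge_0. rewrite Cmod_mult. rewrite Rpow_mult_distr. lra.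
  - apply (@ex_series_ext R_AbsRing R_NormedModule (fun n => scal ((Cmod k)^2)%R (Cmod (f n)^2)%R)).
    intros; reflexivity. apply (@ex_series_scal_l R_AbsRing R_NormedModule); auto.
Qed.

Lemma in_l2_ext (f g : vec) : (forall n, f n = g n) -> in_l2 f -> in_l2 g.
Proof. intros H Hf. unfold in_l2 in *. eapply ex_series_ext; [|apply Hf]. intros n; simpl; rewrite H; auto. Qed.

Lemma in_l2_sub (f g : vec) : in_l2 f -> in_l2 g -> in_l2 (vsub f g).
Proof.
  intros Hf Hg. apply (in_l2_ext (fun n => f n + (-1 * g n))).
  intros n; unfold vsub, Cminus; ring.
  apply in_l2_add; auto. apply in_l2_scal; auto.
Qed.

Lemma in_l2_shiftL (f : vec) : in_l2 f -> in_l2 (fun n => f (S n)).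
Proof. intros Hf. unfold in_l2 in *. apply ex_series_incr_1 in Hf. auto. Qed.

Lemma in_l2_shiftR (f : vec) : in_l2 f -> in_l2 (fun n => match n with O => C0 | S n' => f n' end).
Proof. intros Hf. unfold in_l2 in *. apply ex_series_incr_1. simpl. auto. Qed.

Lemma term_le_Series (a : nat -> R) n : (forall k, 0 <= a k)%R -> ex_series a -> (a n <= Series a)%R.
Proof.
  intros Hpos Hex.
  set (b := fun k => if Nat.eq_dec k n then a n else 0%R).
  assert (Hb : is_series b (sum_n b n)).
  { apply (@is_series_fin R_AbsRing R_NormedModule). intros k Hk. unfold b. destruct (Nat.eq_dec k n); [lia|]. reflexivity. }
  assert (H0 : forall j, (j < n)%nat -> sum_n b j = 0%R).
  { induction j; intros Hj. rewrite sum_O. unfold b. destruct (Nat.eq_dec 0 n); [lia|]. reflexivity.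
    rewrite sum_Sn, IHj by lia. unfold b. destruct (Nat.eq_dec (S j) n); [lia|]. change (0 + 0 = 0)%R; ring. }
  assert (Hsum : sum_n b n = a n).
  { destruct n as [|n]. rewrite sum_O. unfold b. simpl. auto.
    rewrite sum_Sn, H0 by lia. unfold b. destruct (Nat.eq_dec (S n) (S n)); [|lia]. change (0 + a (S n) = a (S n))%R; ring. }
  apply is_series_unique in Hb. rewrite Hsum in Hb. rewrite <- Hb.
  apply Series_le; auto. intros k. unfold b. destruct (Nat.eq_dec k n). subst. split; [apply Hpos|lra]. split; [lra|apply Hpos].
Qed.

Lemma Cmod_le_l2norm (h : vec) n : in_l2 h -> (Cmod (h n) <= l2norm h)%R.
Proof.
  intros Hh. unfold l2norm. rewrite <- (sqrt_pow2 (Cmod (h n))) by apply Cmod_ge_0.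
  apply sqrt_le_1_alt. apply (term_le_Series (fun k => Cmod (h k) ^ 2)%R). intros; apply pow2_ge_0. auto.
Qed.

Lemma l2_conv_pointwise (u : nat -> vec) (g : vec) n :
  (forall K, in_l2 (u K)) -> in_l2 g -> is_lim_seq (fun K => l2norm (vsub (u K) g)) 0%R ->
  Cconv (fun K => u K n) (g n).
Proof.
  intros Hu Hg Hl. apply (Cconv_squeeze _ _ _ (fun K => Cmod_le_l2norm (vsub (u K) g) n (in_l2_sub _ _ (Hu K) Hg))).
  auto.
Qed.

Lemma l2_zero_pointwise (u : nat -> vec) n :
  (forall K, in_l2 (u K)) -> is_lim_seq (fun K => l2norm (u K)) 0%R -> Cconv (fun K => u K n) 0.
Proof.
  intros Hu Hl. apply (Cconv_squeeze _ _ (fun K => l2norm (u K))); auto.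
  intros K. replace (u K n - 0) with (u K n) by ring. apply Cmod_le_l2norm; auto.
Qed.

(** * Extension by zero: p(L), its adjoint and prod_j (alpha_j L^* - 1) *)

Definition zext (g : vec) : V := fun j => if Z_lt_dec j 0 then C0 else g (Z.to_nat j).

Lemma zext_nat g n : zext g (Z.of_nat n) = g n.
Proof. unfold zext. destruct (Z_lt_dec _ 0). lia. rewrite Nat2Z.id. auto. Qed.

Lemma zext_supp g : supp_nonneg (zext g).
Proof. intros j Hj. unfold zext. destruct (Z_lt_dec j 0); auto; lia. Qed.

Lemma zext_Ls g : zext (app opLs g) = shr (zext g).
Proof.
  apply functional_extensionality; intro j. unfold zext, shr; simpl.
  destruct (Z_lt_dec j 0); destruct (Z_lt_dec (j-1) 0); try lia; auto.
  - replace (Z.to_nat j) with O by lia. reflexivity.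
  - replace (Z.to_nat j) with (S (Z.to_nat (j-1))) by lia. reflexivity.
Qed.

Lemma zext_N f : zext (app opN f) = posZ (zext f).
Proof.
  apply functional_extensionality; intro j. unfold zext, posZ; simpl.
  destruct (Z_lt_dec j 0). ring. rewrite INR_IZR_INZ. rewrite Z2Nat.id by lia. reflexivity.
Qed.

Lemma powL_app j f n : app (op_pow opL j) f n = f (n + j)%nat.
Proof.
  revert n; induction j; intros n; simpl. rewrite Nat.add_0_r; auto.
  rewrite IHj. f_equal. lia.
Qed.

Definition coefs (c : nat -> C) (m : nat) : list C := map c (seq 0 (S m)).
(* PS = p(S) extends p(L), and PSs = conj(p)(S^-1) extends its adjoint (adjoint_app). *)
Definition PS c m : V -> V := poly_op shl (coefs c m).
Definition conj_coefs c m : list C := map Cconj (coefs c m).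
Definition PSs c m : V -> V := poly_op shr (conj_coefs c m).

Lemma polyL_app c m f n : app (poly_L c m) f n = fsum (fun j => c j * f (n + j)%nat) (S m).
Proof.
  cbn [app poly_L bnd_op]. rewrite sum_n_fsum. apply fsum_ext. intros i _. rewrite powL_app. reflexivity.
Qed.

Lemma zext_polyL c m h (H : V) : (forall j, (0 <= j)%Z -> zext h j = H j) ->
  forall j, (0 <= j)%Z -> zext (app (poly_L c m) h) j = PS c m H j.
Proof.
  intros Hh j Hj. unfold PS, coefs. rewrite poly_shl_seq.
  unfold zext at 1. destruct (Z_lt_dec j 0); [lia|]. rewrite polyL_app.
  apply fsum_ext. intros i _. simpl. f_equal. rewrite <- Hh by lia.
  rewrite <- zext_nat. f_equal. lia.
Qed.

Lemma zext_polyL_pow c m f k : forall j, (0 <= j)%Z ->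
  zext (app (op_pow (poly_L c m) k) f) j = Nat.iter k (PS c m) (zext f) j.
Proof.
  induction k; intros j Hj. reflexivity.
  simpl. apply zext_polyL; auto.
Qed.

Lemma one_minus_Y_pow c m k f : app (op_pow (op_sub op_id (op_sub op_id (poly_L c m))) k) f = app (op_pow (poly_L c m) k) f.
Proof.
  induction k; simpl. reflexivity.
  rewrite IHk. apply functional_extensionality; intro n. unfold vsub, Cminus. ring.
Qed.

Lemma in_l2_shiftn (f : vec) l : in_l2 f -> in_l2 (fun n => f (n + l)%nat).
Proof.
  intros Hf. induction l. apply (in_l2_ext f); auto. intros n; rewrite Nat.add_0_r; auto.
  apply (in_l2_ext (fun n => f (S n + l)%nat)). intros n. f_equal. lia.
  apply (in_l2_shiftL (fun n => f (n + l)%nat)). auto.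
Qed.

Lemma in_l2_polyL c m f : in_l2 f -> in_l2 (app (poly_L c m) f).
Proof.
  intros Hf. apply (in_l2_ext (fun n => fsum (fun j => c j * f (n + j)%nat) (S m))).
  intros n; rewrite polyL_app; auto.
  generalize (S m). induction n as [|l IH]; simpl.
  - apply (in_l2_ext (fun n => C0 * f n)). intros; ring. apply in_l2_scal; auto.
  - apply in_l2_add. auto. apply in_l2_scal. apply in_l2_shiftn; auto.
Qed.

Lemma in_l2_polyL_pow c m f k : in_l2 f -> in_l2 (app (op_pow (poly_L c m) k) f).
Proof. intros Hf. induction k; simpl; auto. apply in_l2_polyL; auto. Qed.

Definition xi (n : nat) : vec := fun k => if Nat.eq_dec k n then C1 else C0.

Lemma zext_xi n : zext (xi n) = zdelta (Z.of_nat n).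
Proof.
  apply functional_extensionality; intro j. unfold zext, zdelta, xi.
  destruct (Z_lt_dec j 0); destruct (Z.eq_dec j (Z.of_nat n)); try lia; auto.
  destruct (Nat.eq_dec (Z.to_nat j) n); auto; lia.
  destruct (Nat.eq_dec (Z.to_nat j) n); auto; lia.
Qed.

Lemma in_l2_xi n : in_l2 (xi n).
Proof.
  unfold in_l2. exists (sum_n (fun k => Cmod (xi n k) ^ 2)%R n).
  apply (@is_series_fin R_AbsRing R_NormedModule). intros k Hk. unfold xi.
  destruct (Nat.eq_dec k n). lia. rewrite Cmod_0. simpl. change (0 * (0 * 1) = 0)%R. ring.
Qed.

Lemma fsum_xi n (X : nat -> C) N : (n <= N)%nat -> fsum (fun k => xi n k * X k) (S N) = X n.
Proof.
  intros H. induction H.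
  - simpl. rewrite (fsum_ext _ (fun _ => C0)). rewrite fsum_zero by auto. unfold xi.
    destruct (Nat.eq_dec n n); [|lia]. ring.
    intros i Hi. unfold xi. destruct (Nat.eq_dec i n); [lia|]. ring.
  - change (fsum (fun k => xi n k * X k) (S m) + xi n (S m) * X (S m) = X n).
    rewrite IHle. unfold xi. destruct (Nat.eq_dec (S m) n); [lia|]. ring.
Qed.

Lemma polyL_xi_high c m n k : (n < k)%nat -> app (poly_L c m) (xi n) k = C0.
Proof.
  intros Hk. rewrite polyL_app. apply fsum_zero. intros i. unfold xi. destruct (Nat.eq_dec (k+i) n); [lia|]. ring.
Qed.

Lemma adjoint_coord c m Ys g n :
  is_adjoint (op_sub op_id (poly_L c m)) (bnd_op Ys) -> in_l2 g ->
  Cconj (Ys g n) = fsum (fun k => app (op_sub op_id (poly_L c m)) (xi n) k * Cconj (g k)) (S n).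
Proof.
  intros Hadj Hg.
  destruct (Hadj (xi n) g (in_l2_xi n) Hg) as (_ & _ & _ & _ & s & H1 & H2).
  unfold inner_is in H1, H2. cbn [app bnd_op] in H2.
  apply is_series_fin_unique with (N := n) in H1, H2.
  - rewrite sum_n_fsum in H1, H2. rewrite fsum_xi in H2 by lia. congruence.
  - intros k Hk. unfold xi. destruct (Nat.eq_dec k n); [lia|]. change (C0 * Cconj (Ys g k) = C0). ring.
  - intros k Hk. cbn [app op_sub op_id]. unfold vsub. rewrite polyL_xi_high by auto.
    unfold xi. destruct (Nat.eq_dec k n); [lia|]. change ((C0 - C0) * Cconj (g k) = C0). ring.
Qed.

Lemma PSs_zext_coord c m g n :
  PSs c m (zext g) (Z.of_nat n) = fsum (fun k => Cconj (app (poly_L c m) (xi n) k) * g k) (S n).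
Proof.
  unfold PSs, conj_coefs. rewrite (poly_shr_dual _ _ _ n) by (apply zext_supp || lia).
  apply fsum_ext. intros k _. rewrite zext_nat. f_equal.
  rewrite <- poly_shl_conj by apply zdelta_real. f_equal.
  rewrite <- (zext_nat (app (poly_L c m) (xi n)) k).
  rewrite (zext_polyL c m (xi n) (zdelta (Z.of_nat n))) by first [intros; rewrite zext_xi; reflexivity | lia].
  reflexivity.
Qed.

Lemma adjoint_app c m Ys g n :
  is_adjoint (op_sub op_id (poly_L c m)) (bnd_op Ys) -> in_l2 g ->
  Ys g n = g n - PSs c m (zext g) (Z.of_nat n).
Proof.
  intros Hadj Hg.
  rewrite <- (Cconj_conj (Ys g n)), (adjoint_coord c m Ys g n Hadj Hg), Cconj_fsum, PSs_zext_coord.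
  rewrite <- (fsum_xi n g n) at 1 by lia.
  rewrite <- fsum_sub. apply fsum_ext. intros k _.
  cbn [app op_sub op_id]. unfold vsub.
  rewrite Cmult_conj, Cminus_conj, Cconj_conj.
  unfold xi. destruct (Nat.eq_dec k n); [rewrite Cconj_1|rewrite Cconj_0]; ring.
Qed.

Lemma zext_one_minus_adjoint_pow c m Ys k f :
  is_adjoint (op_sub op_id (poly_L c m)) (bnd_op Ys) -> in_l2 f ->
  in_l2 (app (op_pow (op_sub op_id (bnd_op Ys)) k) f) /\
  zext (app (op_pow (op_sub op_id (bnd_op Ys)) k) f) = Nat.iter k (PSs c m) (zext f).
Proof.
  intros Hadj Hf. induction k as [|k [IH1 IH2]]. split; auto.
  set (h := app (op_pow (op_sub op_id (bnd_op Ys)) k) f) in *.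
  assert (HY : in_l2 (Ys h)) by (destruct (Hadj h h IH1 IH1) as (_ & _ & _ & HH & _); exact HH).
  change (app (op_pow (op_sub op_id (bnd_op Ys)) (S k)) f) with (vsub h (Ys h)).
  split. apply in_l2_sub; auto.
  change (Nat.iter (S k) (PSs c m) (zext f)) with (PSs c m (Nat.iter k (PSs c m) (zext f))).
  rewrite <- IH2. apply functional_extensionality; intro j.
  destruct (Z_lt_dec j 0).
  - rewrite zext_supp by auto. unfold PSs. rewrite poly_shr_supp; auto. apply zext_supp.
  - replace j with (Z.of_nat (Z.to_nat j)) by lia. rewrite zext_nat. unfold vsub.
    rewrite (adjoint_app c m Ys h) by auto. ring.
Qed.

Fixpoint fac (alpha : nat -> C) (k : nat) (H : V) : V :=
  match k with
  | O => H
  | S k' => Vsub (Vscal (alpha k') (shr (fac alpha k' H))) (fac alpha k' H)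
  end.

Lemma zext_prod_op alpha k g : zext (app (prod_op alpha k) g) = fac alpha k (zext g).
Proof.
  induction k; simpl. reflexivity. rewrite <- IHk.
  set (h := app (prod_op alpha k) g).
  apply functional_extensionality; intro j. unfold Vsub, Vadd, Vscal.
  destruct (Z_lt_dec j 0).
  - rewrite !zext_supp by lia. rewrite <- (equal_f (zext_Ls h)). rewrite zext_supp by lia. ring.
  - rewrite <- (equal_f (zext_Ls h)). replace j with (Z.of_nat (Z.to_nat j)) by lia.
    rewrite !zext_nat. unfold vsub, vscal. cbn [app opLs bnd_op]. ring.
Qed.

Lemma prod_op_dom alpha k g : dom (prod_op alpha k) g -> in_l2 g.
Proof. induction k; simpl; auto. intros [H _]; auto. Qed.

(** * Coordinatewise decay of the powers of p(L) and p(L)^* *)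

Lemma poly_op_vanish (T : V -> V) (t : Z -> Z) (HT : forall y j, T y j = y (t j)) b (X : nat -> V) :
  (forall j, Cconv (fun K => X K j) 0) -> forall j, Cconv (fun K => poly_op T b (X K) j) 0.
Proof.
  intros HX. induction b as [|c0 b IH]; intros j; simpl.
  - apply Cconv_const.
  - eapply Cconv_eq. apply Cconv_plus. apply Cconv_scal. apply HX.
    eapply Cconv_ext. intros K; rewrite (HT (poly_op T b (X K)) j); reflexivity. apply IH. ring.
Qed.

Lemma shrn_PS c m d y : shrn d (PS c m y) = PS c m (shrn d y).
Proof. unfold PS. apply poly_op_commute. apply linear_shrn. intros; apply shrn_shl. Qed.

Lemma shrn_zext d g : shrn d (zext g) = zext (Nat.iter d (app opLs) g).
Proof.
  induction d. apply shrn_0. rewrite <- shr_shrn, IHd. change (Nat.iter (S d) (app opLs) g) with (app opLs (Nat.iter d (app opLs) g)). rewrite zext_Ls. reflexivity.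
Qed.

Lemma in_l2_iter_Ls d g : in_l2 g -> in_l2 (Nat.iter d (app opLs) g).
Proof. intros Hg; induction d; simpl; auto. apply in_l2_shiftR; auto. Qed.

Lemma PS_iter_vanish c m g :
  (forall f, in_l2 f -> is_lim_seq (fun k => l2norm (app (op_pow (poly_L c m) k) f)) 0%R) ->
  in_l2 g -> forall j, Cconv (fun K => Nat.iter K (PS c m) (zext g) j) 0.
Proof.
  intros H2 Hg j. set (d := Z.to_nat (- j)). set (h := Nat.iter d (app opLs) g).
  set (n0 := Z.to_nat (j + Z.of_nat d)).
  apply (Cconv_ext (fun K => app (op_pow (poly_L c m) K) h n0)).
  - intros K. rewrite <- zext_nat. replace (Z.of_nat n0) with (j + Z.of_nat d)%Z by (unfold n0, d; lia).
    rewrite zext_polyL_pow by (unfold d; lia). unfold h. rewrite <- shrn_zext.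
    rewrite <- (iter_comm (PS c m) (shrn d)) by apply shrn_PS. unfold shrn; f_equal; lia.
  - apply (l2_zero_pointwise (fun K => app (op_pow (poly_L c m) K) h) n0). intros K; apply in_l2_polyL_pow, in_l2_iter_Ls; auto.
    apply H2. apply in_l2_iter_Ls; auto.
Qed.

Lemma PSs_iter_supp c m K G : supp_nonneg G -> supp_nonneg (Nat.iter K (PSs c m) G).
Proof. intros HG; induction K; simpl; auto. apply poly_shr_supp; auto. Qed.

Lemma PSs_iter_vanish c m g :
  (forall f, in_l2 f -> is_lim_seq (fun k => l2norm (app (op_pow (poly_L c m) k) f)) 0%R) ->
  in_l2 g -> forall j, Cconv (fun K => Nat.iter K (PSs c m) (zext g) j) 0.
Proof.
  intros H2 Hg j. destruct (Z_lt_dec j 0) as [l|Hj].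
  - apply (Cconv_ext (fun _ => C0)). intros K. rewrite (PSs_iter_supp c m K (zext g) (zext_supp g) j l). reflexivity. apply Cconv_const.
  - set (n := Z.to_nat j). replace j with (Z.of_nat n) by lia.
    apply (Cconv_ext (fun K => fsum (fun i => zext g (Z.of_nat i) * Cconj (app (op_pow (poly_L c m) K) (xi n) i)) (S n))).
    + intros K. unfold PSs. rewrite <- poly_op_ppow by apply linear_shr.
      rewrite (poly_shr_dual _ _ _ n) by (apply zext_supp || lia).
      apply fsum_ext. intros i Hi. unfold conj_coefs. rewrite <- map_conj_ppow.
      rewrite <- poly_shl_conj by apply zdelta_real.
      rewrite poly_op_ppow by apply linear_shl. fold (PS c m).
      rewrite <- zext_xi. rewrite <- zext_polyL_pow by lia. rewrite (zext_nat (app (op_pow (poly_L c m) K) (xi n)) i).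
      apply Cmult_comm.
    + eapply Cconv_eq. apply Cconv_fsum with (l := fun _ => C0).
      intros i Hi. eapply Cconv_eq. apply Cconv_scal. apply (Cconv_conj _ C0).
      apply (l2_zero_pointwise (fun K => app (op_pow (poly_L c m) K) (xi n)) i). intros K; apply in_l2_polyL_pow, in_l2_xi. apply H2, in_l2_xi.
      rewrite Cconj_0. ring. apply fsum_zero. auto.
Qed.

(** * The two factorisations of prod_j (alpha_j S^-1 - 1) *)

Lemma cprod_mult (u v : nat -> C) k : cprod (fun j => u j * v j) k = cprod u k * cprod v k.
Proof. induction k; simpl. ring. rewrite IHk. ring. Qed.

Lemma cprod_zero (u : nat -> C) k j : (j < k)%nat -> u j = C0 -> cprod u k = C0.
Proof.
  induction k; intros Hj Hu. lia. simpl. destruct (Nat.eq_dec j k).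
  subst. rewrite Hu. ring. rewrite IHk by (auto; lia). ring.
Qed.

Lemma cprod_conj (u : nat -> C) k : Cconj (cprod u k) = cprod (fun j => Cconj (u j)) k.
Proof. induction k; simpl. apply Cconj_1. rewrite Cmult_conj, IHk. reflexivity. Qed.

Lemma peval_seq (c : nat -> C) k l z : peval (map c (seq k l)) z = fsum (fun i => c (k + i)%nat * pow_n z i) l.
Proof.
  revert k; induction l; intros k. reflexivity.
  cbn [map seq peval]. rewrite IHl. rewrite fsum_front. rewrite Nat.add_0_r.
  change (pow_n z 0) with C1.
  rewrite <- fsum_scal. f_equal. ring. apply fsum_ext. intros i _.
  change (pow_n z (S i)) with (z * pow_n z i). replace (k + S i)%nat with (S k + i)%nat by lia. ring.
Qed.

Lemma peval_coefs c m z : peval (coefs c m) z = poly_eval c m z.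
Proof. unfold coefs, poly_eval. rewrite peval_seq, sum_n_fsum. reflexivity. Qed.

Lemma peval_conj a z : peval (map Cconj a) z = Cconj (peval a (Cconj z)).
Proof.
  induction a; simpl. rewrite Cconj_0; reflexivity.
  rewrite IHa, Cplus_conj, Cmult_conj, Cconj_conj. reflexivity.
Qed.

Fixpoint fac_coefs (alpha : nat -> C) (k : nat) : list C :=
  match k with O => [C1] | S k' => pmul [Copp C1; alpha k'] (fac_coefs alpha k') end.
Fixpoint rev_fac_coefs (alpha : nat -> C) (k : nat) : list C :=
  match k with O => [C1] | S k' => pmul [alpha k'; Copp C1] (rev_fac_coefs alpha k') end.

Lemma poly_op_one T H : linear_map T -> poly_op T [C1] H = H.
Proof. intros HT. simpl. rewrite linear_map_zero by auto. apply functional_extensionality; intro j. unfold V0; ring. Qed.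

Lemma poly_fac_coefs alpha k H : poly_op shr (fac_coefs alpha k) H = fac alpha k H.
Proof.
  induction k. simpl. apply functional_extensionality; intro j. unfold V0, shr; ring.
  cbn [fac_coefs]. rewrite poly_op_pmul by apply linear_shr. rewrite IHk. cbn [poly_op fac].
  apply functional_extensionality; intro j. unfold Vsub, Vadd, Vscal, V0, shr. ring.
Qed.

Lemma peval_fac_coefs alpha k z : peval (fac_coefs alpha k) z = cprod (fun j => alpha j * z - 1) k.
Proof. induction k. simpl. ring. cbn [fac_coefs rev_fac_coefs cprod]. rewrite peval_pmul, IHk. simpl. ring. Qed.

Lemma peval_rev_fac_coefs alpha k z : peval (rev_fac_coefs alpha k) z = cprod (fun j => alpha j - z) k.
Proof. induction k. simpl. ring. cbn [fac_coefs rev_fac_coefs cprod]. rewrite peval_pmul, IHk. simpl. ring. Qed.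

Lemma fac_rev_poly alpha k H : fac alpha k H = shrn k (poly_op shl (rev_fac_coefs alpha k) H).
Proof.
  induction k.
  - simpl. apply functional_extensionality; intro j. unfold shrn, V0, shl. replace (j - Z.of_nat 0)%Z with j by lia. ring.
  - cbn [fac rev_fac_coefs]. rewrite IHk. rewrite poly_op_pmul by apply linear_shl. set (X := poly_op shl (rev_fac_coefs alpha k) H). cbn [poly_op].
    apply functional_extensionality; intro j. unfold Vsub, Vadd, Vscal, V0, shr, shrn, shl.
    replace (j - 1 - Z.of_nat k)%Z with (j - Z.of_nat (S k))%Z by lia.
    replace (j - Z.of_nat (S k) + 1)%Z with (j - Z.of_nat k)%Z by lia. ring.
Qed.

Lemma Cconj_neq0 z : z <> C0 -> Cconj z <> C0.
Proof. intros Hz E. apply Hz. rewrite <- (Cconj_conj z), E. apply Cconj_0. Qed.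

Lemma cprod_ext_lt (u v : nat -> C) k : (forall j, (j < k)%nat -> u j = v j) -> cprod u k = cprod v k.
Proof. intros H; induction k; simpl; auto. rewrite IHk, H; auto. Qed.

(* RS = (z p')(S) and RSs = (z conj(p)')(S^-1): the commutators of N with PS and PSs. *)
Definition RS c m : V -> V := poly_op shl (pXderiv (coefs c m)).
Definition RSs c m : V -> V := poly_op shr (pXderiv (conj_coefs c m)).

Lemma linear_PS c m : linear_map (PS c m). Proof. apply linear_poly_op, linear_shl. Qed.
Lemma linear_PSs c m : linear_map (PSs c m). Proof. apply linear_poly_op, linear_shr. Qed.
Lemma linear_RS c m : linear_map (RS c m). Proof. apply linear_poly_op, linear_shl. Qed.
Lemma linear_RSs c m : linear_map (RSs c m). Proof. apply linear_poly_op, linear_shr. Qed.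

Section Factorisation.
Variables (m : nat) (c : nat -> C) (alpha : nat -> C).
Hypothesis Hcm : c m <> RtoC 0.
Hypothesis Hroots : forall z : C, Cminus (RtoC 1) (poly_eval c m z) = RtoC 0 -> Cmod z = 1%R.
Hypothesis Hfactor : forall z : C, Cminus (RtoC 1) (poly_eval c m z)
                 = Cmult (Copp (c m)) (cprod (fun j => Cminus z (alpha j)) m).

Lemma root_unimodular j : (j < m)%nat -> alpha j * Cconj (alpha j) = C1.
Proof.
  intros Hj. assert (Cmod (alpha j) = 1%R).
  { apply Hroots. rewrite Hfactor. rewrite (cprod_zero _ m j); auto. ring. unfold Cminus. ring. }
  rewrite <- Cmod2_conj, H. simpl. f_equal. ring.
Qed.

Definition kappa := cprod alpha m / (- Cconj (c m)).
Definition mu := cprod (fun _ => -1) m / (- c m).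

(* Since conj (alpha_j) = 1 / alpha_j, conjugating the factorisation of 1 - p gives
   prod_j (alpha_j z - 1) = kappa (1 - conj (p (conj z))). *)
Lemma fac_adjoint_form H : fac alpha m H = Vscal kappa (Vsub H (PSs c m H)).
Proof.
  assert (Hco : forall i, nth i (fac_coefs alpha m) C0 = nth i (pscale kappa (padd [C1] (pscale (-1) (conj_coefs c m)))) C0).
  { apply peval_coefs_eq. intros z. rewrite peval_fac_coefs, peval_pscale, peval_padd, peval_pscale. unfold conj_coefs.
    rewrite peval_conj, peval_coefs.
    assert (E := Hfactor (Cconj z)). apply (f_equal Cconj) in E.
    rewrite Cminus_conj, Cconj_1, Cmult_conj, cprod_conj, Copp_conj in E.
    rewrite (cprod_ext_lt (fun j => Cconj (Cconj z - alpha j)) (fun j => z - Cconj (alpha j))) in E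
      by (intros j _; rewrite Cminus_conj, Cconj_conj; reflexivity).
    rewrite (cprod_ext_lt (fun j => alpha j * z - 1) (fun j => alpha j * (z - Cconj (alpha j))))
      by (intros j Hj; rewrite <- (root_unimodular j Hj); ring).
    rewrite cprod_mult. simpl peval.
    replace (C1 + z * 0 + -1 * Cconj (poly_eval c m (Cconj z))) with (C1 - Cconj (poly_eval c m (Cconj z))) by ring.
    rewrite E. unfold kappa. assert (Hc := Cconj_neq0 _ Hcm). field. auto. }
  rewrite <- poly_fac_coefs, (poly_op_coefs_eq _ _ _ _ linear_shr Hco).
  rewrite poly_op_pscale, poly_op_padd, poly_op_one, poly_op_pscale by apply linear_shr. reflexivity.
Qed.

(* alpha S^-1 - 1 = S^-1 (alpha - S), and prod_j (alpha_j - z) = mu (1 - p(z)). *)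
Lemma fac_shifted_form H : fac alpha m H = Vscal mu (shrn m (Vsub H (PS c m H))).
Proof.
  assert (Hco : forall i, nth i (rev_fac_coefs alpha m) C0 = nth i (pscale mu (padd [C1] (pscale (-1) (coefs c m)))) C0).
  { apply peval_coefs_eq. intros z. rewrite peval_rev_fac_coefs, peval_pscale, peval_padd, peval_pscale.
    rewrite peval_coefs. simpl peval.
    replace (C1 + z * 0 + -1 * poly_eval c m z) with (1 - poly_eval c m z) by ring.
    rewrite Hfactor. rewrite (cprod_ext_lt (fun j => alpha j - z) (fun j => (-1) * (z - alpha j))) by (intros; ring).
    rewrite cprod_mult. unfold mu. field. auto. }
  rewrite fac_rev_poly, (poly_op_coefs_eq _ _ _ _ linear_shl Hco).
  rewrite poly_op_pscale, poly_op_padd, poly_op_one, poly_op_pscale by apply linear_shl.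
  apply functional_extensionality; intro j. unfold shrn, Vscal, Vsub, Vadd, PS. reflexivity.
Qed.

Lemma commN_fac_adjoint G j : commN (fac alpha m) G j = - kappa * RSs c m G j.
Proof.
  assert (E := equal_f (commN_poly_shr (conj_coefs c m) G) j).
  unfold commN, Vsub, Vadd, Vscal, posZ in *. rewrite !fac_adjoint_form.
  unfold Vsub, Vadd, Vscal. fold (PSs c m) (RSs c m) in E.
  transitivity (- kappa * (RtoC (IZR j) * PSs c m G j + -1 * PSs c m (fun j0 => RtoC (IZR j0) * G j0) j));
    [ring | rewrite E; ring].
Qed.

Lemma commN_fac_shifted G j :
  commN (fac alpha m) G j = RtoC (INR m) * fac alpha m G j + mu * RS c m G (j - Z.of_nat m)%Z.
Proof.
  assert (E := equal_f (commN_poly_shl (coefs c m) G) (j - Z.of_nat m)%Z).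
  unfold commN, Vsub, Vadd, Vscal, posZ in *. rewrite !fac_shifted_form.
  unfold shrn, Vsub, Vadd, Vscal. fold (PS c m) (RS c m) in E.
  assert (Hj : RtoC (IZR j) = RtoC (IZR (j - Z.of_nat m)) + RtoC (INR m))
    by (rewrite minus_IZR, <- INR_IZR_INZ, <- RtoC_plus; f_equal; ring).
  rewrite Hj.
  transitivity (RtoC (INR m) * (mu * (G (j - Z.of_nat m)%Z + -1 * PS c m G (j - Z.of_nat m)%Z))
    - mu * (RtoC (IZR (j - Z.of_nat m)) * PS c m G (j - Z.of_nat m)%Z
            + -1 * PS c m (fun j0 => RtoC (IZR j0) * G j0) (j - Z.of_nat m)%Z));
    [ring | rewrite E; ring].
Qed.

(* [N, prod_j (alpha_j S^-1 - 1)] computed from both factorisations. *)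
Lemma commN_fac G j :
  kappa * RSs c m G j + mu * RS c m G (j - Z.of_nat m)%Z = - RtoC (INR m) * fac alpha m G j.
Proof.
  assert (E := commN_fac_shifted G j). rewrite commN_fac_adjoint in E.
  transitivity (kappa * RSs c m G j + (- kappa * RSs c m G j - RtoC (INR m) * fac alpha m G j)); [|ring].
  rewrite E. ring.
Qed.

End Factorisation.

(** * Commutators of the partial logarithm sums *)

Definition logsum (T : V -> V) (X : V) (j : Z) (K : nat) : C :=
  fsum (fun i => RtoC (/ INR (S i)) * Nat.iter (S i) T X j) K.

Lemma commN_logsum (T Rop : V -> V) (s : C) X j K :
  linear_map T -> linear_map Rop -> (forall y, Rop (T y) = T (Rop y)) -> (forall y, commN T y = Vscal s (Rop y)) ->
  RtoC (IZR j) * logsum T X j K - logsum T (posZ X) j K = s * fsum (fun k => Rop (Nat.iter k T X) j) K.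
Proof.
  intros HT HR HRT HC. unfold logsum.
  rewrite <- !fsum_scal, <- fsum_sub. apply fsum_ext. intros i _.
  pose proof (equal_f (commN_iter T Rop s i X HT HR HRT HC) j) as E.
  unfold commN, Vsub, Vadd, Vscal, posZ in E.
  assert (Hi : RtoC (INR (S i)) <> 0) by (intro E'; apply RtoC_inj in E'; apply (not_0_INR (S i)); auto).
  transitivity (RtoC (/ INR (S i)) * (RtoC (IZR j) * Nat.iter (S i) T X j
                + -1 * Nat.iter (S i) T (fun j0 => RtoC (IZR j0) * X j0) j)); [unfold posZ; ring|].
  rewrite E, RtoC_inv by (apply not_0_INR; auto). field. auto.
Qed.

Lemma sum_iter_telescope (P R U : V -> V) (a : C) G j K :
  linear_map P -> linear_map R -> linear_map U ->
  (forall y, U (P y) = P (U y)) -> (forall y, U (R y) = R (U y)) ->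
  fsum (fun i => R (Nat.iter i P (Vscal a (U (Vsub G (P G))))) j) K
  = a * (U (R G) j - U (R (Nat.iter K P G)) j).
Proof.
  intros HP HR HU HUP HUR.
  rewrite (fsum_ext _ (fun i => a * (U (R (Nat.iter i P G)) j - U (R (Nat.iter (S i) P G)) j))).
  { rewrite fsum_scal, fsum_tele. reflexivity. }
  intros i _.
  rewrite (proj2 (linear_iter P i HP)), (proj2 HR), <- (iter_comm P U), <- HUR by auto.
  rewrite (linear_vsub (Nat.iter i P)), linear_vsub, linear_vsub by (auto; apply linear_iter; auto).
  rewrite <- (iter_comm P P i G) by reflexivity.
  change (Nat.iter (S i) P G) with (P (Nat.iter i P G)). unfold Vsub, Vadd, Vscal. ring.
Qed.

Lemma log_val_pointwise A h n : log_dom A h -> Cconv (fun K => log_partial A h K n) (log_val A h n).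
Proof.
  intros [_ Hex].
  assert (Hv : l2_lim (log_partial A h) (log_val A h)).
  { unfold log_val. apply epsilon_spec. auto. }
  destruct Hv as (Hg & Hu & Hl). apply l2_conv_pointwise; auto.
Qed.

Lemma log_partial_fsum A h K n :
  log_partial A h K n = fsum (fun i => RtoC (/ INR (S i)) * app (op_pow (op_sub op_id A) (S i)) h n) K.
Proof. unfold log_partial. rewrite sum_n_fsum, fsum_front. ring. Qed.

Lemma log_partial_Y c m h K n :
  log_partial (op_sub op_id (poly_L c m)) h K n = logsum (PS c m) (zext h) (Z.of_nat n) K.
Proof.
  rewrite log_partial_fsum. apply fsum_ext. intros k _.
  rewrite one_minus_Y_pow, <- (zext_polyL_pow c m h (S k) (Z.of_nat n)), zext_nat by lia. reflexivity.
Qed.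

Lemma log_partial_Ys c m Ys h K n :
  is_adjoint (op_sub op_id (poly_L c m)) (bnd_op Ys) -> in_l2 h ->
  log_partial (bnd_op Ys) h K n = logsum (PSs c m) (zext h) (Z.of_nat n) K.
Proof.
  intros Hadj Hh. rewrite log_partial_fsum. apply fsum_ext. intros k _.
  destruct (zext_one_minus_adjoint_pow c m Ys (S k) h Hadj Hh) as [_ E]. rewrite <- E, zext_nat. reflexivity.
Qed.

Lemma opX_app_limit c m Ys f n :
  is_adjoint (op_sub op_id (poly_L c m)) (bnd_op Ys) ->
  dom (opX (op_sub op_id (poly_L c m)) (bnd_op Ys)) f ->
  Cconv (fun K => logsum (PSs c m) (zext f) (Z.of_nat n) K - logsum (PS c m) (zext f) (Z.of_nat n) K)
        (app (opX (op_sub op_id (poly_L c m)) (bnd_op Ys)) f n).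
Proof.
  intros Hadj [HY HYs]. assert (Hf : in_l2 f) by exact (proj1 HY 0%nat).
  apply (Cconv_ext (fun K => log_partial (bnd_op Ys) f K n + -1 * log_partial (op_sub op_id (poly_L c m)) f K n)).
  { intros K. rewrite log_partial_Y, (log_partial_Ys c m Ys) by auto. ring. }
  eapply Cconv_eq; [apply Cconv_plus; [|apply Cconv_scal]; apply log_val_pointwise; auto|].
  cbn. unfold vsub, vscal. ring.
Qed.

Section LogCommutator.
Variables (m : nat) (c : nat -> C) (alpha : nat -> C).
Hypothesis Hcm : c m <> RtoC 0.
Hypothesis Hroots : forall z : C, Cminus (RtoC 1) (poly_eval c m z) = RtoC 0 -> Cmod z = 1%R.
Hypothesis Hfactor : forall z : C, Cminus (RtoC 1) (poly_eval c m z)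
                 = Cmult (Copp (c m)) (cprod (fun j => Cminus z (alpha j)) m).
Hypothesis Hstrong : forall f, in_l2 f -> is_lim_seq (fun k => l2norm (app (op_pow (poly_L c m) k) f)) 0%R.
Variable Ys : vec -> vec.
Hypothesis Hadj : is_adjoint (op_sub op_id (poly_L c m)) (bnd_op Ys).

(* On the range of prod_j (alpha_j S^-1 - 1) the commutator sums telescope. *)
Lemma commN_logsum_fac G j K :
  let F := fac alpha m G in
  RtoC (IZR j) * (logsum (PSs c m) F j K - logsum (PS c m) F j K)
    - (logsum (PSs c m) (posZ F) j K - logsum (PS c m) (posZ F) j K)
  = (kappa m c alpha * RSs c m G j + mu m c * RS c m G (j - Z.of_nat m)%Z)
    - kappa m c alpha * RSs c m (Nat.iter K (PSs c m) G) j
    - mu m c * RS c m (Nat.iter K (PS c m) G) (j - Z.of_nat m)%Z.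
Proof.
  intros F.
  assert (LS := commN_logsum (PSs c m) (RSs c m) 1 F j K (linear_PSs c m) (linear_RSs c m)
                  (fun y => poly_op_comm _ _ _ y linear_shr) (commN_poly_shr _)).
  assert (LP := commN_logsum (PS c m) (RS c m) (-1) F j K (linear_PS c m) (linear_RS c m)
                  (fun y => poly_op_comm _ _ _ y linear_shl) (commN_poly_shl _)).
  assert (TS := sum_iter_telescope (PSs c m) (RSs c m) (fun y => y) (kappa m c alpha) G j K
                  (linear_PSs c m) (linear_RSs c m) (conj (fun _ _ => eq_refl) (fun _ _ => eq_refl))
                  (fun _ => eq_refl) (fun _ => eq_refl)).
  assert (TP := sum_iter_telescope (PS c m) (RS c m) (shrn m) (mu m c) G j K
                  (linear_PS c m) (linear_RS c m) (linear_shrn m) (shrn_PS c m m)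
                  (fun y => poly_op_commute shl (shrn m) _ y (linear_shrn m) (shrn_shl m))).
  cbv beta in TS. rewrite <- (fac_adjoint_form m c alpha) in TS by auto. rewrite <- (fac_shifted_form m c alpha) in TP by auto.
  fold F in TS, TP. unfold shrn at 1 2 in TP.
  transitivity ((RtoC (IZR j) * logsum (PSs c m) F j K - logsum (PSs c m) (posZ F) j K)
                - (RtoC (IZR j) * logsum (PS c m) F j K - logsum (PS c m) (posZ F) j K)); [ring|].
  rewrite LS, LP, TS, TP. ring.
Qed.

Lemma commN_logsum_limit g (Hg : in_l2 g) (n : nat) :
  let F := fac alpha m (zext g) in
  Cconv (fun K => RtoC (IZR (Z.of_nat n)) * (logsum (PSs c m) F (Z.of_nat n) K - logsum (PS c m) F (Z.of_nat n) K)
        - (logsum (PSs c m) (posZ F) (Z.of_nat n) K - logsum (PS c m) (posZ F) (Z.of_nat n) K))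
   (- RtoC (INR m) * F (Z.of_nat n)).
Proof.
  intros F. eapply Cconv_ext; [intros K; symmetry; apply commN_logsum_fac|].
  unfold F. rewrite <- (commN_fac m c alpha Hcm Hroots Hfactor).
  set (k := kappa m c alpha). set (u := mu m c). set (j := Z.of_nat n). set (G := zext g).
  apply (Cconv_ext (fun K => (k * RSs c m G j + u * RS c m G (j - Z.of_nat m)%Z)
    + (- k * RSs c m (Nat.iter K (PSs c m) G) j + - u * RS c m (Nat.iter K (PS c m) G) (j - Z.of_nat m)%Z))).
  { intros K. ring. }
  eapply Cconv_eq; [apply Cconv_plus; [apply Cconv_const|apply Cconv_plus; apply Cconv_scal]|].
  - apply (poly_op_vanish shr (fun x => (x - 1)%Z) (fun _ _ => eq_refl)). apply PSs_iter_vanish; auto.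
  - apply (poly_op_vanish shl (fun x => (x + 1)%Z) (fun _ _ => eq_refl)). apply PS_iter_vanish; auto.
  - ring.
Qed.

Lemma commN_opX_pointwise f n :
  let Xp := opX (op_sub op_id (poly_L c m)) (bnd_op Ys) in
  ran (prod_op alpha m) f -> dom (op_comp Xp opN) f -> dom (op_comp opN Xp) f ->
  RtoC (INR n) * app Xp f n - app Xp (app opN f) n = - RtoC (INR m) * f n.
Proof.
  intros Xp [g [Hgd Hgf]] [[Hf HNf] HXN] [HX _].
  assert (HF : zext f = fac alpha m (zext g)) by (rewrite <- Hgf; apply zext_prod_op).
  assert (Hc := commN_logsum_limit g (prod_op_dom _ _ _ Hgd) n). cbv zeta in Hc.
  rewrite <- HF, <- zext_N, zext_nat in Hc.
  symmetry. apply (Cconv_unique _ _ _ Hc). rewrite INR_IZR_INZ.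
  apply (Cconv_eq _ (RtoC (IZR (Z.of_nat n)) * app Xp f n + -1 * app Xp (app opN f) n)); [|ring].
  eapply Cconv_ext; [|apply Cconv_plus; [apply Cconv_scal|apply (Cconv_scal (-1))]; apply opX_app_limit; auto].
  intros K. simpl. ring.
Qed.

End LogCommutator.

Theorem mainTheorem15
  (m : nat) (c : nat -> C) (alpha : nat -> C) (Ys : vec -> vec) :
  (1 <= m)%nat ->
  c m <> RtoC 0 ->
  (forall f g, in_l2 f -> in_l2 g ->
     app (op_sub op_id (poly_L c m)) f = app (op_sub op_id (poly_L c m)) g -> f = g) ->
  (forall f, in_l2 f ->
     is_lim_seq (fun k => l2norm (app (op_pow (poly_L c m) k) f)) 0) ->
  (forall z : C, Cminus (RtoC 1) (poly_eval c m z) = RtoC 0 -> Cmod z = 1%R) ->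
  (forall z : C, Cminus (RtoC 1) (poly_eval c m z)
                 = Cmult (Copp (c m)) (cprod (fun j => Cminus z (alpha j)) m)) ->
  is_adjoint (op_sub op_id (poly_L c m)) (bnd_op Ys) ->
  let Yp := op_sub op_id (poly_L c m) in
  let Xp := opX Yp (bnd_op Ys) in
  comm_on opN (op_scal (Cdiv Ci (RtoC (INR m))) Xp) (op_scal (Copp Ci) op_id)
    (fun f => ran (prod_op alpha m) f /\ dom (op_comp Xp opN) f
              /\ dom (op_comp opN Xp) f).
Proof.
  intros Hm Hcm _ Hstrong Hroots Hfactor Hadj Yp Xp.
  assert (Hm0 : RtoC (INR m) <> RtoC 0) by (intro E; apply RtoC_inj in E; apply (not_0_INR m); [lia|auto]).
  split.
  - intros f (_ & HXN & (HX & HN & HNX)). split; [|exact HXN].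
    split; [exact HX|]. split; [apply in_l2_scal; auto|].
    apply (in_l2_ext (fun n => Cdiv Ci (RtoC (INR m)) * (RtoC (INR n) * app Xp f n))).
    { intros n. simpl. unfold vscal. ring. }
    apply in_l2_scal; auto.
  - intros f (Hran & HXN & HNX). apply functional_extensionality; intro n.
    assert (Key := commN_opX_pointwise m c alpha Hcm Hroots Hfactor Hstrong Ys Hadj f n Hran HXN HNX).
    fold Yp Xp in Key. cbn [app op_sub op_comp op_scal op_id opN]. unfold vsub, vscal.
    change (fun n0 => RtoC (INR n0) * f n0) with (app opN f).
    transitivity (Cdiv Ci (RtoC (INR m)) * (RtoC (INR n) * app Xp f n - app Xp (app opN f) n)); [ring|].
    rewrite Key. field. auto.
Qed.
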